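(* Assume the standing assumptions (A1)–(A4). If $\rho> L_0/\beta$, then for all $p\in\mathbb R^{n_p}$ $$\psi(p)\le \frac{L_\psi}{2}\Bigl[d(p)+\frac{\kappa_0}{\sqrt\rho}\Bigr]^2,\qquad \kappa_0:=\frac{2L_0}{\beta}\sqrt{\frac{2}{\mu_0}\psi(p_u)} .$$ In particular $\psi(p^* )\le \dfrac{L_\psi\kappa_0^2}{2\rho}$.
   Context: Let $n_p,n_c\ge 1$, let $f_0:\mathbb R^{n_p}\to\mathbb R$ and $c_i:\mathbb R^{n_p}\to\mathbb R$ ($i=1,\dots,n_c$) be continuously differentiable, and let $\{1,\dots,n_c\}=I_s\cup I_h$ be a partition into disjoint sets of soft and hard constraint indices. The original problem is $\min_{p\in\mathbb R^{n_p}} f_0(p)$ subject to $c_i(p)\le 0$ for all $i$; $f^{opt}$ denotes its optimal value and $p^{opt}$ an optimal solution (assumed to exist). For a fixed $\varepsilon_\psi>0$ let $\psi(p):=\sum_{i\in I_s}[\max\{0,c_i(p)\}]^2+\sum_{i\in I_h}[\max\{0,c_i(p)+\varepsilon_\psi\}]^2$, and for a penalty parameter $\rho>0$ let $f(p):=f_0(p)+\rho\,\psi(p)$. A differentiable function $\ell$ belongs to $\mathcal F^1_L$ if $\ell(p_2)\le \ell(p_1)+\langle \ell'(p_1),p_2-p_1\rangle+\frac L2\|p_2-p_1\|^2$ for all $p_1,p_2$, and is $\mu$-strongly convex if $\ell(p_2)\ge \ell(p_1)+\langle \ell'(p_1),p_2-p_1\rangle+\frac \mu2\|p_2-p_1\|^2$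 for all $p_1,p_2$. Standing assumptions: (A1) $f_0(p)\ge 0$ for all $p$; (A2) $f_0\in\mathcal F^1_{L_0}$ and $\psi\in\mathcal F^1_{L_\psi}$ for some reals $L_0,L_\psi\ge 0$; (A3) $f_0$ is $\mu_0$-strongly convex for some $\mu_0>0$, and $\psi$ is convex; (A4) the set $\mathcal A:=\{p:\psi(p)=0\}$ is nonempty and there is $\beta>0$ with $\psi(p)\ge \beta\,[d(p,\mathcal A)]^2$ for all $p$, where $d(p,\mathcal A):=\min_{z\in\mathcal A}\|z-p\|$. Notation: $\|\cdot\|$ is the Euclidean norm; $p^*$ is the unique minimizer of $f$ over $\mathbb R^{n_p}$; $p_u$ is the unique unconstrained minimizer of $f_0$; $p_a$ is a fixed point with $\psi(p_a)=0$; $D_0:=\sup\{\|f_0'(p)\|:\ f_0(p)\le f_0(p_a)\}$; $d(p):=\|p-p^*\|$. *)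

From Stdlib Require Fin.
From Stdlib Require Import Reals Lra ClassicalEpsilon.
Open Scope R_scope.

Definition vec (n : nat) : Type := Fin.t n -> R.

Fixpoint fsum (n : nat) : (Fin.t n -> R) -> R :=
  match n with
  | O => fun _ => 0
  | S m => fun a => a Fin.F1 + fsum m (fun i => a (Fin.FS i))
  end.

Definition vadd {n} (x y : vec n) : vec n := fun i => x i + y i.
Definition vsub {n} (x y : vec n) : vec n := fun i => x i - y i.
Definition vscal {n} (t : R) (x : vec n) : vec n := fun i => t * x i.
Definition edot {n} (x y : vec n) : R := fsum n (fun i => x i * y i).
Definition enorm {n} (x : vec n) : R := sqrt (edot x x).

Definition has_grad {n} (f : vec n -> R) (g : vec n -> vec n) : Prop :=
  forall p eps, 0 < eps -> exists del, 0 < del /\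
    forall h, enorm h < del ->
      Rabs (f (vadd p h) - f p - edot (g p) h) <= eps * enorm h.

Definition vcontinuous {n} (g : vec n -> vec n) : Prop :=
  forall p eps, 0 < eps -> exists del, 0 < del /\
    forall q, enorm (vsub q p) < del -> enorm (vsub (g q) (g p)) < eps.

Definition cont_diff {n} (f : vec n -> R) : Prop :=
  exists g, has_grad f g /\ vcontinuous g.

Definition in_F1L {n} (f : vec n -> R) (L : R) : Prop :=
  exists g, has_grad f g /\
    forall p1 p2, f p2 <= f p1 + edot (g p1) (vsub p2 p1)
                          + L / 2 * (enorm (vsub p2 p1))^2.

Definition strongly_convex {n} (f : vec n -> R) (mu : R) : Prop :=
  exists g, has_grad f g /\
    forall p1 p2, f p2 >= f p1 + edot (g p1) (vsub p2 p1)
                          + mu / 2 * (enorm (vsub p2 p1))^2.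

Definition convex_fun {n} (f : vec n -> R) : Prop :=
  forall x y t, 0 <= t <= 1 ->
    f (vadd (vscal t x) (vscal (1 - t) y)) <= t * f x + (1 - t) * f y.

Definition is_inf (S : R -> Prop) (m : R) : Prop :=
  (forall r, S r -> m <= r) /\ (forall b, (forall r, S r -> b <= r) -> b <= m).

(* distance from p to a set A: d(p,A) = inf_{z in A} ||z - p||
   (equals the min of the paper whenever it is attained). *)
Definition dist_set {n} (A : vec n -> Prop) (p : vec n) : R :=
  epsilon (inhabits 0)
    (fun m => is_inf (fun r => exists z, A z /\ r = enorm (vsub z p)) m).

(* penalty function psi; soft i = true iff i in I_s, otherwise i in I_h *)
Definition psi_fun {np nc} (c : Fin.t nc -> vec np -> R) (soft : Fin.t nc -> bool)
  (eps_psi : R) (p : vec np) : R :=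
  fsum nc (fun i => if soft i then (Rmax 0 (c i p))^2
                    else (Rmax 0 (c i p + eps_psi))^2).

(* At a zero z of psi the gradient of psi vanishes, so L_psi-smoothness gives
   psi(p) <= L_psi/2 |p - z|^2, hence psi(p) <= L_psi/2 (d(p) + d(pstar, A))^2.
   To bound d(pstar, A) compare pstar with a zero z of psi: the error bound and the
   optimality of pstar give rho beta d(pstar, A)^2 <= rho psi(pstar) <= f0(z) - f0(pstar),
   which L0-smoothness and Young's inequality bound by
   |f0'(pstar)|^2 / (2a) + (a + L0)/2 |z - pstar|^2 with a = rho beta - L0/2; taking
   the infimum over z yields a d(pstar, A) <= |f0'(pstar)|.  Finally
   |f0'(pstar)|^2 <= 2 L0 (f0(pstar) - f0(p_u)) <= 2 L0 rho psi(p_u), and mu0 <= L0. *)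
From Stdlib Require Import Reals Lra ClassicalEpsilon.
Open Scope R_scope.

Lemma fsum_ext n (a b : Fin.t n -> R) :
  (forall i, a i = b i) -> fsum n a = fsum n b.
Proof.
  revert a b; induction n as [|n IH]; intros a b Hab; simpl; [reflexivity|].
  rewrite Hab; f_equal; apply IH; intros i; apply Hab.
Qed.

Lemma fsum_add n (a b : Fin.t n -> R) :
  fsum n (fun i => a i + b i) = fsum n a + fsum n b.
Proof.
  revert a b; induction n as [|n IH]; intros a b; simpl; [ring|].
  rewrite (IH (fun i => a (Fin.FS i)) (fun i => b (Fin.FS i))); ring.
Qed.

Lemma fsum_scal n k (a : Fin.t n -> R) :
  fsum n (fun i => k * a i) = k * fsum n a.
Proof.
  revert a; induction n as [|n IH]; intros a; simpl; [ring|].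
  rewrite (IH (fun i => a (Fin.FS i))); ring.
Qed.

Lemma fsum_nonneg n (a : Fin.t n -> R) :
  (forall i, 0 <= a i) -> 0 <= fsum n a.
Proof.
  revert a; induction n as [|n IH]; intros a Ha; simpl; [lra|].
  pose proof (Ha Fin.F1); pose proof (IH (fun i => a (Fin.FS i)) (fun i => Ha _)); lra.
Qed.

Lemma edot_self_nonneg n (x : vec n) : 0 <= edot x x.
Proof. apply fsum_nonneg; intros i; nra. Qed.

Lemma enorm_nonneg n (x : vec n) : 0 <= enorm x.
Proof. apply sqrt_pos. Qed.

Lemma enorm_sqr n (x : vec n) : enorm x ^ 2 = edot x x.
Proof. apply pow2_sqrt, edot_self_nonneg. Qed.

Lemma edot_vadd_scal_self n (x y : vec n) t :
  edot (vadd x (vscal t y)) (vadd x (vscal t y))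
  = edot x x + 2 * t * edot x y + t ^ 2 * edot y y.
Proof.
  unfold edot; rewrite <- !fsum_scal, <- !fsum_add.
  apply fsum_ext; intros i; unfold vadd, vscal; ring.
Qed.

Lemma edot_shift n (w p v : vec n) t :
  edot w (vsub (vadd p (vscal t v)) p) = t * edot w v.
Proof.
  unfold edot; rewrite <- fsum_scal.
  apply fsum_ext; intros i; unfold vsub, vadd, vscal; ring.
Qed.

Lemma enorm_shift_sqr n (p v : vec n) t :
  enorm (vsub (vadd p (vscal t v)) p) ^ 2 = t ^ 2 * edot v v.
Proof.
  rewrite enorm_sqr; unfold edot; rewrite <- fsum_scal.
  apply fsum_ext; intros i; unfold vsub, vadd, vscal; ring.
Qed.

Lemma enorm_vsub_sym n (x y : vec n) : enorm (vsub x y) = enorm (vsub y x).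
Proof. unfold enorm; f_equal; apply fsum_ext; intros i; unfold vsub; ring. Qed.

Lemma enorm_vsub_diag n (x : vec n) : enorm (vsub x x) = 0.
Proof.
  unfold enorm, edot, vsub.
  rewrite (fsum_ext n _ (fun i => 0 * 0)) by (intros; ring).
  rewrite fsum_scal, Rmult_0_l; apply sqrt_0.
Qed.

Lemma quadratic_nonneg_discr X D Y : 0 <= Y ->
  (forall t, 0 <= X + 2 * t * D + t ^ 2 * Y) -> D ^ 2 <= X * Y.
Proof.
  intros [HY|<-] Hq.
  - specialize (Hq (- D / Y)).
    replace (X + 2 * (- D / Y) * D + (- D / Y) ^ 2 * Y) with ((X * Y - D ^ 2) / Y)
      in Hq by (field; lra).
    assert (0 <= (X * Y - D ^ 2) / Y * Y) by (apply Rmult_le_pos; lra).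
    replace ((X * Y - D ^ 2) / Y * Y) with (X * Y - D ^ 2) in H by (field; lra).
    lra.
  - destruct (Req_dec D 0) as [->|HD]; [lra|].
    specialize (Hq (- (X + 1) / (2 * D))).
    replace (X + 2 * (- (X + 1) / (2 * D)) * D + (- (X + 1) / (2 * D)) ^ 2 * 0)
      with (-1) in Hq by (field; lra).
    lra.
Qed.

Lemma edot_young n (x y : vec n) s : 0 < s ->
  edot x y <= edot x x / (2 * s) + s / 2 * edot y y.
Proof.
  intros Hs.
  pose proof (edot_self_nonneg n (vadd x (vscal (- s) y))) as H.
  rewrite edot_vadd_scal_self in H.
  apply (Rmult_le_reg_l (2 * s)); [lra|].
  replace (2 * s * (edot x x / (2 * s) + s / 2 * edot y y))
    with (edot x x + s ^ 2 * edot y y) by (field; lra).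
  lra.
Qed.

Lemma edot_le_enorm_mul n (x y : vec n) : edot x y <= enorm x * enorm y.
Proof.
  pose proof (quadratic_nonneg_discr (edot x x) (edot x y) (edot y y)
    (edot_self_nonneg n y)
    (fun t => eq_ind _ (Rle 0) (edot_self_nonneg n _) _
                (edot_vadd_scal_self n x y t))) as Hd.
  rewrite <- !enorm_sqr in Hd.
  assert (Hxy : 0 <= enorm x * enorm y) by (apply Rmult_le_pos; apply enorm_nonneg).
  destruct (Rle_or_lt (edot x y) (enorm x * enorm y)) as [|Hlt]; [assumption|].
  assert (0 < (edot x y - enorm x * enorm y) * (edot x y + enorm x * enorm y))
    by (apply Rmult_lt_0_compat; lra).
  nra.
Qed.

Lemma enorm_vsub_triangle n (x y z : vec n) :
  enorm (vsub x z) <= enorm (vsub x y) + enorm (vsub y z).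
Proof.
  set (u := vsub x y); set (v := vsub y z).
  assert (Hxz : enorm (vsub x z) ^ 2 = edot u u + 2 * edot u v + edot v v).
  { rewrite enorm_sqr; unfold edot; rewrite <- fsum_scal, <- !fsum_add.
    apply fsum_ext; intros i; unfold u, v, vsub; ring. }
  pose proof (edot_le_enorm_mul n u v).
  pose proof (enorm_nonneg n u); pose proof (enorm_nonneg n v).
  pose proof (enorm_nonneg n (vsub x z)).
  rewrite <- !enorm_sqr in Hxz; nra.
Qed.

Section SmoothFunction.

Variables (n : nat) (f : vec n -> R) (g : vec n -> vec n) (L : R).

Hypothesis f_upper : forall p1 p2,
  f p2 <= f p1 + edot (g p1) (vsub p2 p1) + L / 2 * enorm (vsub p2 p1) ^ 2.

Lemma smooth_grad_at_min z : 0 <= L -> (forall q, f z <= f q) ->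
  forall v, edot (g z) v = 0.
Proof.
  intros HL Hmin v.
  assert (Hq : forall t, 0 <= 0 + 2 * t * (edot (g z) v / 2) + t ^ 2 * (L / 2 * edot v v)).
  { intros t.
    pose proof (f_upper z (vadd z (vscal t v))) as Hup.
    pose proof (Hmin (vadd z (vscal t v))).
    rewrite edot_shift, enorm_shift_sqr in Hup; lra. }
  assert (HY : 0 <= L / 2 * edot v v)
    by (apply Rmult_le_pos; [lra|apply edot_self_nonneg]).
  pose proof (quadratic_nonneg_discr _ _ _ HY Hq) as Hd.
  pose proof (pow2_ge_0 (edot (g z) v / 2)).
  assert (Hsq : (edot (g z) v / 2) ^ 2 = 0) by lra.
  destruct (Req_dec (edot (g z) v) 0) as [|Hne]; [assumption|].
  exfalso; apply (pow_nonzero (edot (g z) v / 2) 2); [lra|exact Hsq].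
Qed.

Lemma smooth_le_at_min z : 0 <= L -> (forall q, f z <= f q) ->
  forall p, f p <= f z + L / 2 * enorm (vsub p z) ^ 2.
Proof.
  intros HL Hmin p.
  pose proof (f_upper z p); rewrite (smooth_grad_at_min z HL Hmin) in H; lra.
Qed.

Lemma smooth_grad_sqr_le_gap m p : 0 < L -> (forall q, m <= f q) ->
  edot (g p) (g p) <= 2 * L * (f p - m).
Proof.
  intros HL Hm.
  pose proof (f_upper p (vadd p (vscal (- / L) (g p)))) as Hup.
  pose proof (Hm (vadd p (vscal (- / L) (g p)))).
  rewrite edot_shift, enorm_shift_sqr in Hup.
  assert (E : - / L * edot (g p) (g p) + L / 2 * ((- / L) ^ 2 * edot (g p) (g p))
              = - (edot (g p) (g p) / (2 * L))) by (field; lra).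
  apply (Rmult_le_reg_l (/ (2 * L))); [apply Rinv_0_lt_compat; lra|].
  replace (/ (2 * L) * (2 * L * (f p - m))) with (f p - m) by (field; lra).
  unfold Rdiv in *; lra.
Qed.

Lemma strong_convexity_le_smoothness mu g' : (1 <= n)%nat ->
  (forall p1 p2, f p2 >= f p1 + edot (g' p1) (vsub p2 p1)
                        + mu / 2 * enorm (vsub p2 p1) ^ 2) ->
  mu <= L.
Proof.
  intros Hn f_lower.
  set (o := fun _ : Fin.t n => 0); set (e := fun _ : Fin.t n => 1).
  assert (He : 0 < edot e e).
  { destruct n as [|k]; [inversion Hn|]; unfold edot; simpl.
    pose proof (fsum_nonneg k (fun i => e (Fin.FS i) * e (Fin.FS i))
                  (fun i => ltac:(unfold e; lra))).
    unfold e in *; lra. }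
  pose proof (f_upper o (vadd o (vscal 1 e))).
  pose proof (f_upper o (vadd o (vscal (-1) e))).
  pose proof (f_lower o (vadd o (vscal 1 e))).
  pose proof (f_lower o (vadd o (vscal (-1) e))).
  rewrite !edot_shift, !enorm_shift_sqr in *; nra.
Qed.

End SmoothFunction.

Section DistanceToSet.

Variables (n : nat) (A : vec n -> Prop).

Hypothesis A_nonempty : exists z, A z.

Lemma dist_set_is_inf p :
  is_inf (fun r => exists z, A z /\ r = enorm (vsub z p)) (dist_set A p).
Proof.
  destruct A_nonempty as [z0 Hz0]; unfold dist_set; apply epsilon_spec.
  set (S := fun r => exists z, A z /\ r = enorm (vsub z p)).
  destruct (completeness (fun r => S (- r))) as [M [HM1 HM2]].
  - exists 0; intros r [z [_ Hr]]; pose proof (enorm_nonneg n (vsub z p)); lra.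
  - exists (- enorm (vsub z0 p)), z0; split; [exact Hz0|ring].
  - exists (- M); split.
    + intros r Hr; enough (- r <= M) by lra.
      apply HM1; red; rewrite Ropp_involutive; exact Hr.
    + intros b Hb; enough (M <= - b) by lra.
      apply HM2; intros r Hr; apply Hb in Hr; lra.
Qed.

Lemma dist_set_le z p : A z -> dist_set A p <= enorm (vsub z p).
Proof. intros Hz; apply (proj1 (dist_set_is_inf p)); exists z; auto. Qed.

Lemma le_dist_set b p :
  (forall z, A z -> b <= enorm (vsub z p)) -> b <= dist_set A p.
Proof.
  intros Hb; apply (proj2 (dist_set_is_inf p)).
  intros r [z [Hz ->]]; auto.
Qed.

Lemma dist_set_nonneg p : 0 <= dist_set A p.
Proof. apply le_dist_set; intros z _; apply enorm_nonneg. Qed.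

Lemma dist_set_le_add p q : dist_set A p <= enorm (vsub p q) + dist_set A q.
Proof.
  enough (dist_set A p - enorm (vsub p q) <= dist_set A q) by lra.
  apply le_dist_set; intros z Hz.
  pose proof (dist_set_le z p Hz).
  pose proof (enorm_vsub_triangle n z q p).
  rewrite (enorm_vsub_sym n q p) in *; lra.
Qed.

Lemma le_dist_set_sqr k c p : 0 <= k ->
  (forall z, A z -> c <= k * enorm (vsub z p) ^ 2) -> c <= k * dist_set A p ^ 2.
Proof.
  intros [Hk|<-] Hc.
  - assert (Hsqrt : sqrt (Rmax 0 (c / k)) <= dist_set A p).
    { apply le_dist_set; intros z Hz.
      rewrite <- (sqrt_pow2 (enorm (vsub z p))) by apply enorm_nonneg.
      apply sqrt_le_1_alt, Rmax_lub; [apply pow2_ge_0|].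
      apply (Rmult_le_reg_l k); [exact Hk|].
      replace (k * (c / k)) with c by (field; lra); auto. }
    assert (c / k <= dist_set A p ^ 2).
    { pose proof (Rmax_r 0 (c / k)); pose proof (pow2_sqrt _ (Rmax_l 0 (c / k))).
      pose proof (sqrt_pos (Rmax 0 (c / k))); nra. }
    replace c with (k * (c / k)) by (field; lra).
    apply Rmult_le_compat_l; lra.
  - destruct A_nonempty as [z Hz]; specialize (Hc z Hz); lra.
Qed.

End DistanceToSet.

Lemma psi_fun_nonneg np nc (c : Fin.t nc -> vec np -> R) soft eps_psi p :
  0 <= psi_fun c soft eps_psi p.
Proof. apply fsum_nonneg; intros i; destruct (soft i); apply pow2_ge_0. Qed.

Section PenaltyBound.

Variables (n : nat) (f0 psi : vec n -> R) (g0 gpsi : vec n -> vec n).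
Variables (rho L0 Lpsi mu0 beta : R) (pstar pu : vec n).

Let A := fun z => psi z = 0.

Hypothesis psi_nonneg : forall p, 0 <= psi p.
Hypothesis A_nonempty : exists z, psi z = 0.
Hypothesis f0_upper : forall p1 p2,
  f0 p2 <= f0 p1 + edot (g0 p1) (vsub p2 p1) + L0 / 2 * enorm (vsub p2 p1) ^ 2.
Hypothesis psi_upper : forall p1 p2,
  psi p2 <= psi p1 + edot (gpsi p1) (vsub p2 p1) + Lpsi / 2 * enorm (vsub p2 p1) ^ 2.
Hypothesis psi_error_bound : forall p, psi p >= beta * dist_set A p ^ 2.
Hypothesis pstar_min : forall q, f0 pstar + rho * psi pstar <= f0 q + rho * psi q.
Hypothesis pu_min : forall q, f0 pu <= f0 q.
Hypotheses (rho_pos : 0 < rho) (beta_pos : 0 < beta) (mu0_pos : 0 < mu0).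
Hypotheses (mu0_le_L0 : mu0 <= L0) (Lpsi_nonneg : 0 <= Lpsi).
Hypothesis L0_lt_rho_beta : L0 < rho * beta.

Lemma psi_le_sqr_dist p : psi p <= Lpsi / 2 * dist_set A p ^ 2.
Proof.
  apply le_dist_set_sqr; [exact A_nonempty|lra|]; intros z Hz.
  rewrite enorm_vsub_sym, <- (Rplus_0_l (_ * _)), <- Hz.
  apply (smooth_le_at_min n psi gpsi Lpsi psi_upper z Lpsi_nonneg).
  intros q; rewrite Hz; apply psi_nonneg.
Qed.

Lemma grad_f0_pstar_sqr_le : edot (g0 pstar) (g0 pstar) <= 2 * L0 * (rho * psi pu).
Proof.
  assert (gap : f0 pstar - f0 pu <= rho * psi pu).
  { pose proof (pstar_min pu); pose proof (psi_nonneg pstar); nra. }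
  pose proof (smooth_grad_sqr_le_gap n f0 g0 L0 f0_upper (f0 pu) pstar
                ltac:(lra) pu_min).
  nra.
Qed.

Lemma dist_pstar_sqr_le :
  (rho * beta - L0 / 2) ^ 2 * dist_set A pstar ^ 2 <= edot (g0 pstar) (g0 pstar).
Proof.
  set (m := dist_set A pstar); set (G := edot (g0 pstar) (g0 pstar)).
  set (a := rho * beta - L0 / 2).
  assert (Ha : 0 < a) by (unfold a; lra).
  assert (Hz : forall z, A z ->
            rho * beta * m ^ 2 - G / (2 * a) <= (a + L0) / 2 * enorm (vsub z pstar) ^ 2).
  { intros z Hz.
    pose proof (psi_error_bound pstar) as Herr; fold m in Herr.
    pose proof (pstar_min z) as Hmin; unfold A in Hz; rewrite Hz in Hmin.
    pose proof (f0_upper pstar z) as Hup.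
    pose proof (edot_young n (g0 pstar) (vsub z pstar) a Ha) as Hyoung.
    rewrite <- (enorm_sqr n (vsub z pstar)) in Hyoung; fold G in Hyoung.
    assert (rho * (beta * m ^ 2) <= rho * psi pstar)
      by (apply Rmult_le_compat_l; lra).
    lra. }
  assert (Hk : 0 <= (a + L0) / 2) by lra.
  pose proof (le_dist_set_sqr n A A_nonempty _ _ pstar Hk Hz) as Hinf; fold m in Hinf.
  assert (Hhalf : a / 2 * m ^ 2 <= G / (2 * a)) by (unfold a in *; lra).
  apply (Rmult_le_compat_l (2 * a)) in Hhalf; [|lra].
  replace (2 * a * (G / (2 * a))) with G in Hhalf by (field; lra).
  replace (2 * a * (a / 2 * m ^ 2)) with (a ^ 2 * m ^ 2) in Hhalf by (field; lra).
  exact Hhalf.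
Qed.

Lemma dist_pstar_le :
  dist_set A pstar <= 2 * L0 / beta * sqrt (2 / mu0 * psi pu) / sqrt rho.
Proof.
  set (m := dist_set A pstar); set (S := sqrt (2 / mu0 * psi pu)); set (r := sqrt rho).
  set (a := rho * beta - L0 / 2).
  assert (Hm : 0 <= m) by (apply dist_set_nonneg; exact A_nonempty).
  assert (HS : 0 <= S) by apply sqrt_pos.
  assert (Hr : 0 < r) by (apply sqrt_lt_R0; lra).
  assert (Hrr : r * r = rho) by (apply sqrt_sqrt; lra).
  assert (HSS : S * S = 2 / mu0 * psi pu).
  { apply sqrt_sqrt, Rmult_le_pos; [|apply psi_nonneg].
    apply Rlt_le, Rdiv_lt_0_compat; lra. }
  assert (Hgrad : 2 * L0 * (rho * psi pu) <= (L0 * r * S) ^ 2).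
  { replace ((L0 * r * S) ^ 2) with (L0 * rho * L0 * (2 / mu0 * psi pu))
      by (rewrite <- Hrr, <- HSS; ring).
    replace (L0 * rho * L0 * (2 / mu0 * psi pu))
      with (2 * L0 * (rho * psi pu) * (L0 / mu0)) by (field; lra).
    assert (Hratio : 1 <= L0 / mu0)
      by (apply (Rmult_le_reg_r mu0); [lra|]; field_simplify; lra).
    pose proof (psi_nonneg pu).
    assert (0 <= 2 * L0 * (rho * psi pu)) by (repeat apply Rmult_le_pos; lra).
    rewrite <- (Rmult_1_r (2 * L0 * (rho * psi pu))) at 1.
    apply Rmult_le_compat_l; assumption. }
  pose proof dist_pstar_sqr_le as Hdist; pose proof grad_f0_pstar_sqr_le as Hg0.
  fold m a in Hdist.
  assert (Ham : a * m <= L0 * r * S).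
  { assert (0 <= L0 * r * S) by (apply Rmult_le_pos; nra).
    assert (0 <= a * m) by (apply Rmult_le_pos; unfold a; lra).
    assert ((a * m) ^ 2 <= (L0 * r * S) ^ 2) by (rewrite Rpow_mult_distr; lra).
    nra. }
  assert (Hbm : r * (beta * r * m) <= r * (2 * L0 * S)).
  { replace (r * (beta * r * m)) with (rho * beta * m) by (rewrite <- Hrr; ring).
    unfold a in Ham; nra. }
  apply Rmult_le_reg_l in Hbm; [|exact Hr].
  apply (Rmult_le_reg_l (beta * r)); [nra|].
  replace (beta * r * (2 * L0 / beta * S / r)) with (2 * L0 * S) by (field; lra).
  lra.
Qed.

Theorem psi_le_penalty_bound p :
  psi p <= Lpsi / 2 * (enorm (vsub p pstar)
                        + 2 * L0 / beta * sqrt (2 / mu0 * psi pu) / sqrt rho) ^ 2.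
Proof.
  pose proof (psi_le_sqr_dist p).
  pose proof (dist_set_le_add n A A_nonempty p pstar).
  pose proof (dist_set_nonneg n A A_nonempty p).
  pose proof dist_pstar_le.
  assert (dist_set A p ^ 2 <= (enorm (vsub p pstar)
            + 2 * L0 / beta * sqrt (2 / mu0 * psi pu) / sqrt rho) ^ 2) by nra.
  nra.
Qed.

End PenaltyBound.

Theorem lemma2 (np nc : nat) (Hnp : (1 <= np)%nat) (Hnc : (1 <= nc)%nat)
  (f0 : vec np -> R) (c : Fin.t nc -> vec np -> R) (soft : Fin.t nc -> bool)
  (eps_psi rho L0 Lpsi mu0 beta : R) (pstar pu : vec np) :
  cont_diff f0 -> (forall i, cont_diff (c i)) ->
  0 < eps_psi -> 0 < rho ->
  (* (A1) *)
  (forall p, 0 <= f0 p) ->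
  (* (A2) *)
  0 <= L0 -> 0 <= Lpsi -> in_F1L f0 L0 -> in_F1L (psi_fun c soft eps_psi) Lpsi ->
  (* (A3) *)
  0 < mu0 -> strongly_convex f0 mu0 -> convex_fun (psi_fun c soft eps_psi) ->
  (* (A4) *)
  (exists z, psi_fun c soft eps_psi z = 0) -> 0 < beta ->
  (forall p, psi_fun c soft eps_psi p >=
     beta * (dist_set (fun z => psi_fun c soft eps_psi z = 0) p)^2) ->
  (* p* minimizes f = f0 + rho psi, p_u minimizes f0 *)
  (forall q, f0 pstar + rho * psi_fun c soft eps_psi pstar
             <= f0 q + rho * psi_fun c soft eps_psi q) ->
  (forall q, f0 pu <= f0 q) ->
  rho > L0 / beta ->
  let kappa0 := 2 * L0 / beta * sqrt (2 / mu0 * psi_fun c soft eps_psi pu) in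
  (forall p, psi_fun c soft eps_psi p <=
      Lpsi / 2 * (enorm (vsub p pstar) + kappa0 / sqrt rho)^2) /\
  psi_fun c soft eps_psi pstar <= Lpsi * kappa0^2 / (2 * rho).
Proof.
  intros _ _ _ Hrho _ _ HLpsi [g0 [_ F0]] [gpsi [_ Fpsi]] Hmu [g0' [_ S0]] _
         HA Hbeta Herr Hstar Hu Hrb kappa0.
  pose proof (strong_convexity_le_smoothness np f0 g0 L0 F0 mu0 g0' Hnp S0) as HmuL.
  assert (Hrb' : L0 < rho * beta).
  { apply (Rmult_lt_compat_r beta) in Hrb; [|exact Hbeta].
    unfold Rdiv in Hrb; rewrite Rmult_assoc, Rinv_l, Rmult_1_r in Hrb; lra. }
  pose proof (psi_le_penalty_bound np f0 (psi_fun c soft eps_psi) g0 gpsi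
                rho L0 Lpsi mu0 beta pstar pu (psi_fun_nonneg np nc c soft eps_psi)
                HA F0 Fpsi Herr Hstar Hu Hrho Hbeta Hmu HmuL HLpsi Hrb') as Hbound.
  split; [exact Hbound|].
  specialize (Hbound pstar); rewrite enorm_vsub_diag in Hbound; fold kappa0 in Hbound.
  replace (Lpsi * kappa0 ^ 2 / (2 * rho)) with (Lpsi / 2 * (0 + kappa0 / sqrt rho) ^ 2);
    [exact Hbound|].
  rewrite Rplus_0_l; unfold Rdiv.
  rewrite Rpow_mult_distr, pow_inv, pow2_sqrt by lra; field; lra.
Qed.
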